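(* Let $T(n) = (3n+1)/2^{v_2(3n+1)}$ for odd $n\ge 1$, let $n_0$ be an odd positive integer with orbit $n_{t+1} = T(n_t)$, and $X_t = \mathbf{1}[n_t\equiv 1 \pmod 4]$. Let $s$ be a burst start (i.e. $X_s = 1$ and either $s = 0$ or $X_{s-1}=0$) with $n_s \equiv 25$, $29$, or $57 \pmod{64}$, and let $t \ge s$ be the burst-ending time of that burst run (the last index with $X_s = \dots = X_t = 1$). If $n_t \equiv 1 \pmod 8$, then $n_t \equiv 25 \pmod{32}$. In particular no such cycle yields a burst-ending value with $n_t \equiv 1 \pmod 8$ and $n_t \equiv 9 \pmod{32}$.
   Context: $v_2$ is the $2$-adic valuation. Burst starts in the classes $25, 29, 57 \pmod{64}$ are called unconditional non-mixing cycles. *)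

From mathcomp Require Import all_boot.

Definition v2 (m : nat) : nat := logn 2 m.

Definition T (n : nat) : nat := (3 * n + 1) %/ 2 ^ (v2 (3 * n + 1)).

Definition syr_orbit (n0 t : nat) : nat := iter t T n0.

Definition burstX (n0 t : nat) : bool := syr_orbit n0 t %% 4 == 1.

(** A start value congruent to 25, 29 or 57 mod 64 is sent by one Syracuse
    step to a value congruent to 3 mod 4, so its burst has length one: the
    burst-ending value is the start value itself.  Of the three residues only
    25 and 57 are 1 mod 8, and both are 25 mod 32. *)

From mathcomp Require Import all_boot.
From mathcomp Require Import zify.

Lemma T_odd_part (n k m : nat) : odd m -> 3 * n + 1 = 2 ^ k * m -> T n = m.
Proof.
move=> odd_m def_n.
by rewrite /T /v2 def_n mulnC logn_Gauss ?coprime2n // pfactorK // mulnK ?expn_gt0.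
Qed.

Lemma syr_orbitS (n0 t : nat) : syr_orbit n0 t.+1 = T (syr_orbit n0 t).
Proof. by []. Qed.

Lemma T_mod4_eq3 (n : nat) :
  n %% 64 = 25 \/ n %% 64 = 29 \/ n %% 64 = 57 -> T n %% 4 = 3.
Proof.
have def_n := divn_eq n 64; set q := n %/ 64 in def_n.
case=> [r | [r | r]]; rewrite r in def_n.
- rewrite (@T_odd_part n 2 (48 * q + 19)); [lia | by rewrite oddD oddM | lia].
- rewrite (@T_odd_part n 3 (24 * q + 11)); [lia | by rewrite oddD oddM | lia].
- rewrite (@T_odd_part n 2 (48 * q + 43)); [lia | by rewrite oddD oddM | lia].
Qed.

Lemma burst_end_at_start (n0 s t : nat) :
  ~~ burstX n0 s.+1 -> s <= t -> (forall j, s <= j <= t -> burstX n0 j) ->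
  t = s.
Proof.
move=> not_next le_st run; apply/eqP; rewrite eqn_leq le_st andbT leqNgt.
apply/negP => lt_st.
by move: not_next; rewrite run // ltnW // lt_st.
Qed.

Lemma mod64_mod8_eq1_mod32 (n : nat) :
  n %% 64 = 25 \/ n %% 64 = 29 \/ n %% 64 = 57 -> n %% 8 = 1 -> n %% 32 = 25.
Proof.
rewrite -[n %% 8](modn_dvdm _ (isT : 8 %| 64)) -(modn_dvdm _ (isT : 32 %| 64)).
by case=> [-> | [-> | ->]].
Qed.

Theorem proposition5p3 (n0 s t : nat) :
  odd n0 -> 0 < n0 ->
  (* s is a burst start *)
  burstX n0 s -> (s = 0 \/ ~~ burstX n0 s.-1) ->
  (syr_orbit n0 s %% 64 = 25 \/ syr_orbit n0 s %% 64 = 29 \/ syr_orbit n0 s %% 64 = 57) ->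
  (* t is the burst-ending time of the burst run starting at s *)
  s <= t -> (forall j, s <= j <= t -> burstX n0 j) -> ~~ burstX n0 t.+1 ->
  syr_orbit n0 t %% 8 = 1 ->
  syr_orbit n0 t %% 32 = 25 /\ syr_orbit n0 t %% 32 <> 9.
Proof.
move=> _ _ _ _ start_mod64 le_st run _ end_mod8.
have next_mod4 : syr_orbit n0 s.+1 %% 4 = 3.
  by rewrite syr_orbitS; apply: T_mod4_eq3.
have ets : t = s.
  by apply: burst_end_at_start le_st run; rewrite /burstX next_mod4.
subst t.
by rewrite (mod64_mod8_eq1_mod32 _ start_mod64 end_mod8).
Qed.
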